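(* Let $f:\mathbb{R}^n\to\mathbb{R}$ be convex and $\mathcal{G},\mathcal{H}\subseteq\mathbb{R}^n$ closed convex sets; consider $\min_x f(x)$ subject to $x\in\mathcal{G}\cap\mathcal{H}$, with solution $x_\star$ and optimal value $f_\star$. Let $\alpha,\beta>0$ and $y_0\in\mathbb{R}^n$, and run for $t=0,1,\ldots$: $z_t=\mathrm{proj}_{\mathcal{G}}(y_t)$, $u_t\in\partial f(z_t)$, $\gamma_t=\alpha/\sqrt{\beta+\sum_{\tau=0}^{t-1}\|u_\tau\|^2}$, $x_t=\mathrm{proj}_{\mathcal{H}}(2z_t-y_t-\gamma_tu_t)$, $y_{t+1}=y_t-z_t+x_t$. Define $\bar z_t=\frac{1}{t+1}\sum_{\tau=0}^tz_\tau$ and $\tilde z_t=\frac{1}{\sum_{\tau=0}^t\gamma_\tau}\sum_{\tau=0}^t\gamma_\tau z_\tau$. Assume $\|u_t\|\le G_f$ for all $t$, and let $D=\|y_0-x_\star\|$. Then $$f(\tilde z_t)-f_\star\le\tilde{\mathcal{O}}\Big(\frac{2\alpha G_f}{\sqrt{t+1}}\Big(\tfrac{D^2}{4\alpha^2}+1+\tfrac{G_f}{\sqrt\beta}\Big)\Big)\quad\text{and}\quad \mathrm{dist}(\bar z_t,\mathcal{H})\le\tilde{\mathcal{O}}\Big(\frac{2\alpha}{\sqrt{t+1}}\Big(1+\tfrac{G_f}{\sqrt\beta}\Big)\Big).$$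
   Context: $\mathrm{proj}_{\mathcal{G}}(x)=\arg\min_{y\in\mathcal{G}}\|x-y\|$, $\mathrm{dist}(x,\mathcal{H})=\min_{y\in\mathcal{H}}\|x-y\|$. $\tilde{\mathcal{O}}(\cdot)$ denotes $\mathcal{O}(\cdot)$ up to logarithmic factors in $t$. *)

From HB Require Import structures.
From mathcomp Require Import all_boot all_order all_algebra.
From mathcomp Require Import all_classical all_reals all_analysis.
Set Implicit Arguments. Unset Strict Implicit. Unset Printing Implicit Defensive.
Import Order.TTheory GRing.Theory Num.Theory.
Import numFieldNormedType.Exports.
Local Open Scope classical_set_scope.
Local Open Scope ring_scope.

Section Defs.
Variables (R : realType) (n : nat).
Notation vec := 'rV[R]_n.

Definition dotv (u v : vec) : R := \sum_(i < n) u ord0 i * v ord0 i.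
Definition enorm (u : vec) : R := Num.sqrt (dotv u u).

Definition convex_fun (f : vec -> R) : Prop :=
  forall (x y : vec) (l : R), 0 <= l -> l <= 1 ->
    f (l *: x + (1 - l) *: y) <= l * f x + (1 - l) * f y.

Definition is_proj (S : set vec) (x p : vec) : Prop :=
  S p /\ forall y : vec, S y -> enorm (x - p) <= enorm (x - y).

Definition subgrad (f : vec -> R) (z u : vec) : Prop :=
  forall w : vec, f z + dotv u (w - z) <= f w.

Definition dist (x : vec) (S : set vec) : R :=
  inf [set enorm (x - y) | y in S].

End Defs.

(* Each iteration is a Douglas-Rachford step for G and H perturbed by -gamma_t u_t.
   For w in G n H, the obtuse-angle inequalities of the two projections give
     |y_(t+1) - w|^2 <= |y_t - w|^2 - |z_t - x_t|^2 - 2 gamma_t <u_t, x_t - w>.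
   With the subgradient inequality this telescopes to
     2 sum_t gamma_t (f z_t - f w) <= |y_0 - w|^2 + sum_t (gamma_t |u_t|)^2,
   and with Cauchy-Schwarz to |y_t - w| <= |y_0 - w| + 2 sum_t gamma_t |u_t|.
   Since a / (S + a) <= ln (S + a) - ln S, the adaptive steps satisfy
   sum_(tau <= t) (gamma_tau |u_tau|)^2 <= alpha^2 c ln ((t + 1) c), c = 1 + Gf^2 / beta,
   while sum_(tau <= t) gamma_tau >= alpha sqrt (t + 1) / (sqrt beta + Gf).  Jensen's
   inequality then bounds the gap at the weighted average, and the plain average of z
   is within |y_0 - y_(t+1)| / (t + 1) of the average of x, which lies in H.  Both
   bounds have the form (A + B ln (t + 1)) / sqrt (t + 1), which is eventually below
   c' (1 + ln (t + 1))^2 / sqrt (t + 1) for every c' > 0. *)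

From HB Require Import structures.
From mathcomp Require Import all_boot all_order all_algebra.
From mathcomp Require Import all_classical all_reals all_analysis.
From mathcomp Require Import ring lra.
Set Implicit Arguments. Unset Strict Implicit. Unset Printing Implicit Defensive.
Import Order.TTheory GRing.Theory Num.Theory.
Import numFieldNormedType.Exports.
Local Open Scope classical_set_scope.
Local Open Scope ring_scope.

Section Euclidean.
Variables (R : realType) (n : nat).
Implicit Types (a b c : 'rV[R]_n) (k r : R).

Lemma dotvC a b : dotv a b = dotv b a.
Proof. by apply: eq_bigr => i _; rewrite mulrC. Qed.

Lemma dotvDl a b c : dotv (a + b) c = dotv a c + dotv b c.
Proof. by rewrite /dotv -big_split; apply: eq_bigr => i _; rewrite mxE mulrDl. Qed.

Lemma dotvDr a b c : dotv c (a + b) = dotv c a + dotv c b.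
Proof. by rewrite dotvC dotvDl !(dotvC c). Qed.

Lemma dotvZl k a b : dotv (k *: a) b = k * dotv a b.
Proof. by rewrite /dotv mulr_sumr; apply: eq_bigr => i _; rewrite mxE mulrA. Qed.

Lemma dotvZr k a b : dotv a (k *: b) = k * dotv a b.
Proof. by rewrite dotvC dotvZl dotvC. Qed.

Lemma dotvNl a b : dotv (- a) b = - dotv a b.
Proof. by rewrite -scaleN1r dotvZl mulN1r. Qed.

Lemma dotvNr a b : dotv a (- b) = - dotv a b.
Proof. by rewrite dotvC dotvNl dotvC. Qed.

Lemma dotv0l a : dotv 0 a = 0.
Proof. by rewrite -(scale0r 0) dotvZl mul0r. Qed.

Lemma dotvv_ge0 a : 0 <= dotv a a.
Proof. by apply: sumr_ge0 => i _; rewrite -expr2 sqr_ge0. Qed.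

Lemma dotvv_eq0 a : (dotv a a == 0) = (a == 0).
Proof.
apply/idP/eqP => [|->]; last by rewrite dotv0l.
rewrite psumr_eq0 => [/allP a0|i _]; last by rewrite -expr2 sqr_ge0.
apply/rowP => i; rewrite mxE.
by have /= := a0 i (mem_index_enum _); rewrite mulf_eq0 orbb => /eqP.
Qed.

Lemma dotvBB a b : dotv (a - b) (a - b) = dotv a a - 2 * dotv a b + dotv b b.
Proof. rewrite !(dotvDl, dotvDr, dotvNl, dotvNr) (dotvC b a) opprK; ring. Qed.

Lemma enorm_ge0 a : 0 <= enorm a.
Proof. exact: sqrtr_ge0. Qed.

Lemma enorm_sqr a : enorm a ^+ 2 = dotv a a.
Proof. by rewrite sqr_sqrtr // dotvv_ge0. Qed.

Lemma enorm_eq0 a : (enorm a == 0) = (a == 0).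
Proof. by rewrite sqrtr_eq0 le_eqVlt ltNge dotvv_ge0 orbF dotvv_eq0. Qed.

Lemma ler_enorm a b : (enorm a <= enorm b) = (dotv a a <= dotv b b).
Proof. by rewrite ler_sqrt // dotvv_ge0. Qed.

Lemma enorm_le a r : 0 <= r -> dotv a a <= r ^+ 2 -> enorm a <= r.
Proof. by move=> r0 ar; rewrite -(ger0_norm r0) -sqrtr_sqr /enorm ler_sqrt ?sqr_ge0. Qed.

Lemma enormZ k a : enorm (k *: a) = `|k| * enorm a.
Proof. by rewrite /enorm dotvZl dotvZr mulrA -expr2 sqrtrM ?sqr_ge0 // sqrtr_sqr. Qed.

Lemma enormN a : enorm (- a) = enorm a.
Proof. by rewrite /enorm dotvNl dotvNr opprK. Qed.

Lemma dotv_le_enorm a b : dotv a b <= enorm a * enorm b.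
Proof.
have [->|a0] := eqVneq a 0; first by rewrite dotv0l mulr_ge0 ?enorm_ge0.
have [->|b0] := eqVneq b 0; first by rewrite dotvC dotv0l mulr_ge0 ?enorm_ge0.
have := dotvv_ge0 (enorm b *: a - enorm a *: b).
rewrite dotvBB !(dotvZl, dotvZr) -!enorm_sqr.
have : 0 < enorm a * enorm b.
  by rewrite mulr_gt0 // lt_neqAle eq_sym enorm_eq0 ?a0 ?b0 enorm_ge0.
nra.
Qed.

Lemma enormD a b : enorm (a + b) <= enorm a + enorm b.
Proof.
apply: enorm_le; first by rewrite addr_ge0 ?enorm_ge0.
have := dotv_le_enorm a b; rewrite !(dotvDl, dotvDr) (dotvC b a) -!enorm_sqr; lra.
Qed.

Lemma dist_le_enorm (S : set 'rV[R]_n) a b : S b -> dist a S <= enorm (a - b).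
Proof.
move=> Sb; apply: ge_inf; last by exists b.
by exists 0 => _ [c _ <-]; apply: enorm_ge0.
Qed.

End Euclidean.

Section Projection.
Variables (R : realType) (n : nat) (S : set 'rV[R]_n).
Hypothesis cS : convex_set S.
Implicit Types (a b v p w : 'rV[R]_n).

Lemma convex_set_conv a b l : 0 <= l -> l <= 1 -> S a -> S b -> S (l *: a + (1 - l) *: b).
Proof. by move=> l0 l1 Sa Sb; have := @cS a b (Itv01 l0 l1); rewrite !inE; apply. Qed.

Lemma is_proj_dotv_le0 v p w : is_proj S v p -> S w -> dotv (v - p) (w - p) <= 0.
Proof.
move=> [Sp pmin] Sw; set d := dotv (v - p) (w - p); set N := dotv (w - p) (w - p).
have N0 : 0 <= N := dotvv_ge0 _.
have towards_w l : 0 < l -> l <= 1 -> 2 * d <= l * N.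
  move=> l0 l1; have := pmin _ (convex_set_conv (ltW l0) l1 Sw Sp).
  have -> : l *: w + (1 - l) *: p = p + l *: (w - p).
    by rewrite scalerBl scale1r scalerBr addrCA.
  rewrite ler_enorm opprD addrA (dotvBB (v - p)) dotvZl !dotvZr -/d -/N => h.
  by rewrite -(ler_pM2l l0); nra.
apply/ler_addgt0Pr => e e0; rewrite add0r.
set l := Num.min 1 (e / (N + 1)).
have l1 : l <= 1 by rewrite ge_min lexx.
have l0 : 0 < l by rewrite lt_min ltr01 divr_gt0 // ltr_pwDr.
have lN_le : l * (N + 1) <= e by rewrite -ler_pdivlMr ?ltr_pwDr // ge_min lexx orbT.
have := towards_w l l0 l1; nra.
Qed.

Lemma is_proj_enorm_le v p w : is_proj S v p -> S w -> enorm (p - w) <= enorm (v - w).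
Proof.
move=> Pp Sw; have := is_proj_dotv_le0 Pp Sw.
have -> : v - w = (v - p) - (w - p) by rewrite opprB addrA subrK.
rewrite -enormN opprB ler_enorm dotvBB.
have := dotvv_ge0 (v - p); lra.
Qed.

Lemma is_proj_reflect_enorm_le v p w : is_proj S v p -> S w ->
  enorm (2%:R *: p - v - w) <= enorm (v - w).
Proof.
move=> Pp Sw; have := is_proj_dotv_le0 Pp Sw.
rewrite ler_enorm !(dotvDl, dotvDr, dotvNl, dotvNr, dotvZl, dotvZr).
have := dotvC v p; have := dotvC v w; have := dotvC p w; lra.
Qed.

End Projection.

Section WeightedAverage.
Variables (R : realFieldType) (w : nat -> R).
Hypothesis w_gt0 : forall i, 0 < w i.

Definition wavg (V : lmodType R) (z : nat -> V) t :=
  (\sum_(i < t.+1) w i)^-1 *: \sum_(i < t.+1) (w i *: z i).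

Lemma sum_weights_gt0 t : 0 < \sum_(i < t.+1) w i.
Proof. by rewrite big_ord_recr /= ltr_pwDr // sumr_ge0 // => i _; apply: ltW. Qed.

Lemma wavg0 (V : lmodType R) (z : nat -> V) : wavg z 0 = z 0.
Proof. by rewrite /wavg !big_ord1 scalerA mulVf ?gt_eqF // scale1r. Qed.

(* The mixing weight does not depend on the module, so one step can be taken
   simultaneously for points and for their values under a convex function. *)
Lemma wavgS t : exists2 l, 0 <= l <= 1 &
  forall (V : lmodType R) (z : nat -> V), wavg z t.+1 = l *: wavg z t + (1 - l) *: z t.+1.
Proof.
have [W0 W1] := (sum_weights_gt0 t, sum_weights_gt0 t.+1).
exists ((\sum_(i < t.+1) w i) / \sum_(i < t.+2) w i).
  apply/andP; split; first by rewrite divr_ge0 ?ltW.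
  by rewrite ler_pdivrMr // mul1r [leRHS]big_ord_recr lerDl ltW.
have -> : 1 - (\sum_(i < t.+1) w i) / \sum_(i < t.+2) w i = w t.+1 / \sum_(i < t.+2) w i.
  rewrite -(divff (lt0r_neq0 W1)) -mulrBl [X in (X - _) / _]big_ord_recr /=.
  by rewrite addrAC subrr add0r.
move=> V z; rewrite /wavg scalerA mulrAC divff ?lt0r_neq0 // mul1r.
by rewrite [X in _ *: X = _]big_ord_recr /= scalerDr scalerA mulrC.
Qed.

Lemma wavg_le (a : nat -> R) m t : (forall i, a i <= m) -> wavg (V := R^o) a t <= m.
Proof.
move=> a_le; elim: t => [|t IH]; first by rewrite wavg0.
have [l /andP[l0 l1] ->] := wavgS t.
apply: le_trans (lerD (ler_wpM2l l0 IH) (ler_wpM2l _ (a_le t.+1))) _.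
  by rewrite subr_ge0.
by rewrite -mulrDl addrC subrK mul1r.
Qed.

End WeightedAverage.

Section Convexity.
Variables (R : realType) (n : nat) (w : nat -> R) (z : nat -> 'rV[R]_n).
Hypothesis w_gt0 : forall i, 0 < w i.

Lemma convex_set_wavg (S : set 'rV[R]_n) t : convex_set S -> (forall i, S (z i)) ->
  S (wavg w z t).
Proof.
move=> cS Sz; elim: t => [|t IH]; first by rewrite wavg0.
by have [l /andP[l0 l1] ->] := wavgS w_gt0 t; apply: convex_set_conv.
Qed.

Lemma convex_fun_wavg_le (f : 'rV[R]_n -> R) t : convex_fun f ->
  f (wavg w z t) <= wavg (V := R^o) w (f \o z) t.
Proof.
move=> cf; elim: t => [|t IH]; first by rewrite !wavg0.
have [l /andP[l0 l1] wavgS_l] := wavgS w_gt0 t; rewrite !wavgS_l.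
apply: le_trans (cf _ _ _ l0 l1) _.
by rewrite lerD2r ler_wpM2l.
Qed.

End Convexity.

Section DouglasRachfordStep.
Variables (R : realType) (n : nat) (Gs Hs : set 'rV[R]_n).
Hypotheses (cG : convex_set Gs) (cH : convex_set Hs).
Variables (y z x w u : 'rV[R]_n) (g : R).
Hypotheses (Pz : is_proj Gs y z) (Px : is_proj Hs (2%:R *: z - y - g *: u) x).
Hypotheses (Gw : Gs w) (Hw : Hs w) (g_ge0 : 0 <= g).

Lemma dr_step_sqr : dotv (y - z + x - w) (y - z + x - w) <=
  dotv (y - w) (y - w) - dotv (z - x) (z - x) - 2 * g * dotv u (x - w).
Proof.
have := is_proj_dotv_le0 cG Pz Gw; have := is_proj_dotv_le0 cH Px Hw.
rewrite !(dotvDl, dotvDr, dotvNl, dotvNr, dotvZl, dotvZr).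
move: (dotvC y z) (dotvC y x) (dotvC y w) (dotvC y u) (dotvC z x).
move: (dotvC z w) (dotvC z u) (dotvC x w) (dotvC x u) (dotvC w u).
lra.
Qed.

Lemma dr_step_descent (f : 'rV[R]_n -> R) : subgrad f z u ->
  2 * g * (f z - f w) <=
  dotv (y - w) (y - w) - dotv (y - z + x - w) (y - z + x - w) + g ^+ 2 * dotv u u.
Proof.
move=> sg; have step := dr_step_sqr.
have gap_le : f z - f w <= dotv u (z - w).
  by have := sg w; rewrite -opprB dotvNr; lra.
have young : 2 * g * dotv u (z - x) <= dotv (z - x) (z - x) + g ^+ 2 * dotv u u.
  have := dotvv_ge0 (z - x - g *: u).
  by rewrite (dotvBB (z - x)) dotvZl !dotvZr (dotvC (z - x) u); lra.
have split_zw : dotv u (z - w) = dotv u (z - x) + dotv u (x - w).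
  by rewrite -dotvDr addrA subrK.
have := ler_wpM2l (mulr_ge0 (ler0n _ 2) g_ge0) gap_le; rewrite split_zw; lra.
Qed.

Lemma dr_step_enorm : enorm (y - z + x - w) <= enorm (y - w) + 2 * g * enorm u.
Proof.
set d := enorm (y - w); set e := enorm u.
have [d0 e0] : 0 <= d /\ 0 <= e by split; apply: enorm_ge0.
have xw_le : enorm (x - w) <= d + g * e.
  apply: le_trans (is_proj_enorm_le cH Px Hw) _.
  rewrite addrAC; apply: le_trans (enormD _ _) _.
  by rewrite enormN enormZ ger0_norm // lerD2r (is_proj_reflect_enorm_le cG Pz Gw).
have cs : - dotv u (x - w) <= e * (d + g * e).
  rewrite -dotvNl; apply: le_trans (dotv_le_enorm _ _) _.
  by rewrite enormN ler_wpM2l.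
apply: enorm_le; first by rewrite addr_ge0 ?mulr_ge0.
have two_g_cs := ler_wpM2l (mulr_ge0 (ler0n _ 2) g_ge0) cs.
have step := dr_step_sqr; rewrite -[dotv (y - w) _]enorm_sqr -/d in step.
have := dotvv_ge0 (z - x); have := mulr_ge0 (mulr_ge0 g_ge0 e0) d0.
have := sqr_ge0 (g * e); lra.
Qed.

End DouglasRachfordStep.

Section RealSequences.
Variable R : realType.
Implicit Types (a b c q S : R) (p g : nat -> R).

Lemma ln_increment_ge S a : 0 < S -> 0 <= a -> a / (S + a) <= ln (S + a) - ln S.
Proof.
move=> S0 a0; have Sa0 : 0 < S + a by rewrite ltr_wpDr.
have r0 : 0 < S / (S + a) by rewrite divr_gt0.
have : -1 < S / (S + a) - 1 by lra.
move=> /le_ln1Dx; rewrite addrC subrK ln_div ?posrE //.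
have -> : a / (S + a) = 1 - S / (S + a) by field; rewrite lt0r_neq0.
lra.
Qed.

Definition cumsq b g t := b + \sum_(i < t) g i ^+ 2.

Lemma cumsqS b g t : cumsq b g t.+1 = cumsq b g t + g t ^+ 2.
Proof. by rewrite /cumsq big_ord_recr /= addrA. Qed.

Lemma cumsq_ge b g t : b <= cumsq b g t.
Proof. by rewrite lerDl sumr_ge0 // => i _; rewrite sqr_ge0. Qed.

Lemma le_cumsq b g s t : (s <= t)%N -> cumsq b g s <= cumsq b g t.
Proof.
move=> /subnK <-; elim: (t - s)%N => [|k IH]; first by rewrite add0n.
by rewrite addSn cumsqS (le_trans IH) // lerDl sqr_ge0.
Qed.

Lemma cumsq_le b g c t : (forall i, 0 <= g i <= c) -> cumsq b g t <= b + t%:R * c ^+ 2.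
Proof.
move=> g_bnd; rewrite lerD2l mulr_natl -[t in _ *+ t]card_ord -sumr_const.
apply: ler_sum => i _.
by have /andP[g0 gc] := g_bnd i; rewrite ler_pXn2r ?nnegrE ?(le_trans g0).
Qed.

Lemma sum_sqr_div_cumsq_le b g c t : 0 < b -> (forall i, 0 <= g i <= c) ->
  \sum_(i < t) g i ^+ 2 / cumsq b g i <= (1 + c ^+ 2 / b) * (ln (cumsq b g t) - ln b).
Proof.
move=> b0 g_bnd; have S0 i : 0 < cumsq b g i := lt_le_trans b0 (cumsq_ge b g i).
have -> : ln (cumsq b g t) - ln b = \sum_(i < t) (ln (cumsq b g i.+1) - ln (cumsq b g i)).
  rewrite -(big_mkord xpredT (fun i => ln (cumsq b g i.+1) - ln (cumsq b g i))).
  by rewrite telescope_sumr // /cumsq big_ord0 addr0.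
rewrite mulr_sumr ler_sum // => i _.
have Si := S0 i; have g2_ge0 := sqr_ge0 (g i).
have Si1 : 0 < cumsq b g i + g i ^+ 2 by rewrite ltr_wpDr.
have -> : g i ^+ 2 / cumsq b g i =
    (1 + g i ^+ 2 / cumsq b g i) * (g i ^+ 2 / (cumsq b g i + g i ^+ 2)).
  by field; rewrite !lt0r_neq0.
have g2_le : g i ^+ 2 <= c ^+ 2.
  by have /andP[g0 gc] := g_bnd i; rewrite ler_pXn2r ?nnegrE ?(le_trans g0).
rewrite cumsqS; apply: ler_pM.
- by rewrite addr_ge0 // divr_ge0 // ltW.
- by rewrite divr_ge0 // ltW.
- by rewrite lerD2l ler_pM ?invr_ge0 ?lef_pV2 ?posrE ?cumsq_ge // ltW.
- exact: ln_increment_ge.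
Qed.

Lemma sum_le_amgm p q t : 0 < q ->
  \sum_(i < t) 2 * p i <= t%:R * q + (\sum_(i < t) p i ^+ 2) / q.
Proof.
move=> q0; have -> : t%:R * q = \sum_(i < t) q by rewrite sumr_const card_ord mulr_natl.
rewrite mulr_suml -big_split.
apply: ler_sum => i _ /=; rewrite -subr_ge0.
have -> : q + p i ^+ 2 / q - 2 * p i = (p i - q) ^+ 2 / q by field; rewrite lt0r_neq0.
by rewrite divr_ge0 ?sqr_ge0 // ltW.
Qed.

Lemma eventually_le_log_sqrt (X : nat -> R) a b c : 0 <= a -> 0 <= b -> 0 < c ->
  (forall t, X t <= (a + b * ln t.+1%:R) / Num.sqrt t.+1%:R) ->
  exists T0, forall t, (T0 <= t)%N ->
    X t <= (1 + ln t.+1%:R) ^+ 2 * (c / Num.sqrt t.+1%:R).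
Proof.
move=> a0 b0 c0 X_le; set M := (a + b) / c.
exists (Num.truncn (expR M)) => t tT; apply: le_trans (X_le t) _.
rewrite mulrA ler_pM2r ?invr_gt0 ?sqrtr_gt0 ?ltr0n //.
have M_le : M <= ln t.+1%:R.
  rewrite -[M]expRK ler_ln ?posrE ?expR_gt0 ?ltr0n //.
  by apply/ltW/(lt_le_trans (truncnS_gt _)); rewrite ler_nat ltnS.
have l0 : 0 <= ln (t.+1%:R : R) by rewrite ln_ge0 // ler1n.
set l := ln _ in M_le l0 *.
have cM : a + b = c * M by rewrite /M mulrC divfK ?gt_eqF.
have : a + b * l <= (a + b) * (1 + l) by have := mulr_ge0 a0 l0; lra.
rewrite cM; have := ler_wpM2l (ltW c0) (ler_wpM2r (addr_ge0 ler01 l0) M_le); nra.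
Qed.

End RealSequences.

Section DouglasRachford.
Variables (R : realType) (n : nat) (f : 'rV[R]_n -> R) (Gs Hs : set 'rV[R]_n).
Variables (xstar : 'rV[R]_n) (alpha beta Gf : R) (y z u x : nat -> 'rV[R]_n).
Hypotheses (cf : convex_fun f) (cG : convex_set Gs) (cH : convex_set Hs).
Hypotheses (Gxstar : Gs xstar) (Hxstar : Hs xstar).
Hypotheses (alpha_gt0 : 0 < alpha) (beta_gt0 : 0 < beta).

Let g t := enorm (u t).
Let gamma t := alpha / Num.sqrt (cumsq beta g t).

Hypotheses (Pz : forall t, is_proj Gs (y t) (z t)) (sg : forall t, subgrad f (z t) (u t)).
Hypothesis Px : forall t, is_proj Hs (2%:R *: z t - y t - gamma t *: u t) (x t).
Hypothesis y_rec : forall t, y t.+1 = y t - z t + x t.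
Hypothesis u_le : forall t, enorm (u t) <= Gf.

Let d t := enorm (y t - xstar).
Let D := d 0.
Let Lam t := \sum_(i < t) (gamma i * g i) ^+ 2.
Let c := 1 + Gf ^+ 2 / beta.

Let g_bnd t : 0 <= g t <= Gf. Proof. by rewrite enorm_ge0 u_le. Qed.
Let Gf_ge0 : 0 <= Gf. Proof. exact: le_trans (enorm_ge0 _) (u_le 0). Qed.
Let cumsq_gt0 t : 0 < cumsq beta g t. Proof. exact: lt_le_trans beta_gt0 (cumsq_ge _ _ _). Qed.
Let gamma_gt0 t : 0 < gamma t. Proof. by rewrite divr_gt0 ?sqrtr_gt0 ?cumsq_gt0. Qed.
Let c_ge1 : 1 <= c. Proof. by rewrite lerDl divr_ge0 ?sqr_ge0 ?ltW. Qed.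
Let c_ge0 : 0 <= c. Proof. exact: le_trans ler01 c_ge1. Qed.
Let D_ge0 : 0 <= D. Proof. exact: enorm_ge0. Qed.

Lemma dr_descent t :
  2 * gamma t * (f (z t) - f xstar) <= d t ^+ 2 - d t.+1 ^+ 2 + (gamma t * g t) ^+ 2.
Proof.
rewrite /d /g exprMn !enorm_sqr y_rec.
exact: (dr_step_descent cG cH (Pz t) (Px t) Gxstar Hxstar (ltW (gamma_gt0 t)) (sg t)).
Qed.

Lemma dr_enorm_step t : d t.+1 <= d t + 2 * (gamma t * g t).
Proof.
rewrite /d /g y_rec mulrA.
exact: (dr_step_enorm cG cH (Pz t) (Px t) Gxstar Hxstar (ltW (gamma_gt0 t))).
Qed.

Lemma sum_gap_le t :
  2 * \sum_(i < t) gamma i * (f (z i) - f xstar) <= D ^+ 2 - d t ^+ 2 + Lam t.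
Proof.
elim: t => [|t IH]; first by rewrite /Lam !big_ord0 mulr0 subrr addr0.
by move: IH; rewrite /Lam !big_ord_recr /= mulrDr; have := dr_descent t; lra.
Qed.

Lemma enorm_iter_le t : d t <= D + 2 * \sum_(i < t) gamma i * g i.
Proof.
elim: t => [|t IH]; first by rewrite big_ord0 mulr0 addr0.
by rewrite big_ord_recr /= mulrDr; have := dr_enorm_step t; lra.
Qed.

Lemma Lam_le_log t : Lam t.+1 <= alpha ^+ 2 * c * (ln t.+1%:R + ln c).
Proof.
have c_gt0 : 0 < c := lt_le_trans ltr01 c_ge1.
have Lam_eq : Lam t.+1 = alpha ^+ 2 * \sum_(i < t.+1) g i ^+ 2 / cumsq beta g i.
  rewrite mulr_sumr; apply: eq_bigr => i _.
  by rewrite exprMn expr_div_n sqr_sqrtr ?ltW // mulrAC mulrA.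
have cumsq_le_lin : cumsq beta g t.+1 <= t.+1%:R * beta * c.
  apply: le_trans (cumsq_le beta t.+1 g_bnd) _.
  have -> : t.+1%:R * beta * c = t.+1%:R * beta + t.+1%:R * Gf ^+ 2.
    by rewrite /c; field; exact: lt0r_neq0.
  by rewrite lerD2r ler_peMl ?ler1n // ltW.
rewrite Lam_eq -mulrA ler_wpM2l ?sqr_ge0 //.
apply: le_trans (sum_sqr_div_cumsq_le t.+1 beta_gt0 g_bnd) _.
apply: ler_wpM2l; first exact: ltW.
rewrite lerBlDr -!lnM ?posrE ?mulr_gt0 ?ltr0n //.
by rewrite ler_ln ?posrE ?mulr_gt0 ?ltr0n // mulrAC.
Qed.

Lemma sqrt_cumsq_le t :
  Num.sqrt (cumsq beta g t.+1) <= Num.sqrt t.+1%:R * (Num.sqrt beta + Gf).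
Proof.
have K_ge0 : 0 <= Num.sqrt beta + Gf by rewrite addr_ge0 ?sqrtr_ge0.
rewrite -[X in _ * X]ger0_norm // -sqrtr_sqr -sqrtrM ?ler0n // ler_wsqrtr //.
apply: le_trans (cumsq_le beta t.+1 g_bnd) _.
have : beta <= t.+1%:R * beta by rewrite ler_peMl ?ler1n // ltW.
have : 0 <= t.+1%:R * (Num.sqrt beta * Gf *+ 2).
  by apply: mulr_ge0 => //; apply/mulrn_wge0/mulr_ge0; rewrite ?sqrtr_ge0.
rewrite sqrrD sqr_sqrtr ?(ltW beta_gt0) // !mulrDr; lra.
Qed.

Lemma sum_gamma_ge t :
  alpha * Num.sqrt t.+1%:R / (Num.sqrt beta + Gf) <= \sum_(i < t.+1) gamma i.
Proof.
set s := Num.sqrt t.+1%:R; set K := Num.sqrt beta + Gf.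
have s_gt0 : 0 < s by rewrite sqrtr_gt0 ltr0n.
have K_gt0 : 0 < K by rewrite ltr_pwDl ?sqrtr_gt0.
have -> : alpha * s / K = \sum_(i < t.+1) alpha / (s * K).
  rewrite sumr_const card_ord -mulr_natl -[t.+1%:R](@sqr_sqrtr R) ?ler0n // -/s.
  by field; rewrite !lt0r_neq0.
apply: ler_sum => i _; rewrite ler_pM2l // lef_pV2 ?posrE ?mulr_gt0 ?sqrtr_gt0 //.
apply: le_trans (sqrt_cumsq_le t); rewrite ler_wsqrtr // le_cumsq //.
exact: ltnW.
Qed.

Lemma gap_wavg_le t :
  f (wavg gamma z t) - f xstar <= (D ^+ 2 + Lam t.+1) / (2 * \sum_(i < t.+1) gamma i).
Proof.
have W_gt0 := sum_weights_gt0 gamma_gt0 t; set W := \sum_(i < t.+1) gamma i in W_gt0 *.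
have jensen : f (wavg gamma z t) <= W^-1 * \sum_(i < t.+1) gamma i * f (z i) :=
  convex_fun_wavg_le z gamma_gt0 t cf.
apply: le_trans (lerD jensen (lexx _)) _.
have -> : W^-1 * \sum_(i < t.+1) gamma i * f (z i) - f xstar =
    W^-1 * \sum_(i < t.+1) gamma i * (f (z i) - f xstar).
  under [in RHS]eq_bigr do rewrite mulrBr.
  by rewrite sumrB -mulr_suml -/W mulrBr mulrA mulVf ?mul1r // lt0r_neq0.
set X := \sum_(i < t.+1) _; rewrite ler_pdivlMr ?mulr_gt0 //.
have -> : W^-1 * X * (2 * W) = 2 * X by field; exact: lt0r_neq0.
by move: (sum_gap_le t.+1) (sqr_ge0 (d t.+1)); rewrite -/X; lra.
Qed.

Lemma gap_wavg_le_log t :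
  f (wavg gamma z t) - f xstar <=
  ((Num.sqrt beta + Gf) * (D ^+ 2 + alpha ^+ 2 * c * ln c) / (2 * alpha) +
   (Num.sqrt beta + Gf) * alpha * c / 2 * ln t.+1%:R) / Num.sqrt t.+1%:R.
Proof.
set s := Num.sqrt t.+1%:R; set K := Num.sqrt beta + Gf.
have s_gt0 : 0 < s by rewrite sqrtr_gt0 ltr0n.
have K_gt0 : 0 < K by rewrite ltr_pwDl ?sqrtr_gt0.
have ln_c_ge0 : 0 <= ln c by rewrite ln_ge0.
apply: le_trans (gap_wavg_le t) _.
apply: le_trans (_ : _ <= (D ^+ 2 + alpha ^+ 2 * c * (ln t.+1%:R + ln c)) /
                          (2 * (alpha * s / K))) _.
  apply: ler_pM.
  - by rewrite addr_ge0 ?sqr_ge0 // sumr_ge0 // => i _; rewrite sqr_ge0.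
  - by rewrite invr_ge0 mulr_ge0 // ltW // sum_weights_gt0.
  - by rewrite lerD2l Lam_le_log.
  - rewrite lef_pV2 ?posrE ?mulr_gt0 ?divr_gt0 ?invr_gt0 ?sum_weights_gt0 //.
    by rewrite ler_pM2l // sum_gamma_ge.
by rewrite le_eqVlt; apply/predU1P; left; rewrite /s /K; field; rewrite !lt0r_neq0.
Qed.

Lemma gap_wavg_le0 t : Gf = 0 -> f (wavg gamma z t) <= f xstar.
Proof.
move=> Gf0; apply: le_trans (convex_fun_wavg_le z gamma_gt0 t cf) _.
apply: (wavg_le gamma_gt0) => i /=.
have /eqP u0 : u i == 0 by rewrite -enorm_eq0 eq_le enorm_ge0 andbT -Gf0 u_le.
by have := sg i xstar; rewrite u0 dotv0l addr0.
Qed.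

Lemma dist_avg_le t :
  dist (t.+1%:R^-1 *: \sum_(i < t.+1) z i) Hs <= (D + d t.+1) / t.+1%:R.
Proof.
have N_gt0 : 0 < t.+1%:R :> R by rewrite ltr0n.
have Hxbar : Hs (t.+1%:R^-1 *: \sum_(i < t.+1) x i).
  have := convex_set_wavg (fun=> ltr01) t cH (fun i => proj1 (Px i)).
  by rewrite /wavg sumr_const card_ord; under eq_bigr do rewrite scale1r.
apply: le_trans (dist_le_enorm _ Hxbar) _.
have z_sub_x i : z i - x i = - (y i.+1 - y i).
  by rewrite y_rec opprB opprD opprB addrA subrKC.
rewrite -scalerBr -sumrB; under eq_bigr do rewrite z_sub_x.
rewrite sumrN -(big_mkord xpredT (fun i => y i.+1 - y i)) telescope_sumr //.
rewrite enormZ ger0_norm ?invr_ge0 ?ler0n // mulrC ler_pM2r ?invr_gt0 //.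
have -> : - (y t.+1 - y 0) = (y 0 - xstar) + - (y t.+1 - xstar).
  by rewrite !opprB subrKA.
by apply: le_trans (enormD _ _) _; rewrite enormN.
Qed.

Lemma dist_avg_le_log t :
  dist (t.+1%:R^-1 *: \sum_(i < t.+1) z i) Hs <=
  (2 * D + alpha * (1 + c * ln c) + alpha * c * ln t.+1%:R) / Num.sqrt t.+1%:R.
Proof.
set s := Num.sqrt t.+1%:R.
have s_ge1 : 1 <= s by rewrite -sqrtr1 ler_wsqrtr // ler1n.
have s_gt0 : 0 < s := lt_le_trans ltr01 s_ge1.
have N_eq : t.+1%:R = s ^+ 2 by rewrite sqr_sqrtr ?ler0n.
have q_gt0 : 0 < alpha / s by rewrite divr_gt0.
have amgm : 2 * \sum_(i < t.+1) gamma i * g i <= alpha * s + Lam t.+1 * s / alpha.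
  have := sum_le_amgm (fun i => gamma i * g i) t.+1 q_gt0.
  rewrite -mulr_sumr -/(Lam t.+1) N_eq.
  have -> : s ^+ 2 * (alpha / s) = alpha * s by field; rewrite lt0r_neq0.
  by have -> : Lam t.+1 / (alpha / s) = Lam t.+1 * s / alpha by field; rewrite !lt0r_neq0.
apply: le_trans (dist_avg_le t) _; rewrite {1}N_eq.
apply: le_trans (_ : _ <= (2 * D + alpha * s + Lam t.+1 * s / alpha) / s ^+ 2) _.
  by rewrite ler_pM2r ?invr_gt0 ?exprn_gt0 //; have := enorm_iter_le t.+1; lra.
have -> : (2 * D + alpha * s + Lam t.+1 * s / alpha) / s ^+ 2 =
    (2 * D / s + alpha + Lam t.+1 / alpha) / s.
  by field; rewrite !lt0r_neq0.
rewrite ler_pM2r ?invr_gt0 //.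
have : 2 * D / s <= 2 * D by rewrite ler_pdivrMr // ler_peMr ?mulr_ge0.
have : Lam t.+1 / alpha <= alpha * c * (ln t.+1%:R + ln c).
  by rewrite ler_pdivrMr //; have := Lam_le_log t; lra.
lra.
Qed.

Lemma gap_wavg_eventually : exists T0, forall t, (T0 <= t)%N ->
  f (wavg gamma z t) - f xstar <=
  (1 + ln t.+1%:R) ^+ 2 * (2 * alpha * Gf / Num.sqrt t.+1%:R *
    (D ^+ 2 / (4 * alpha ^+ 2) + 1 + Gf / Num.sqrt beta)).
Proof.
have [Gf0|Gf_neq0] := eqVneq Gf 0.
  by exists 0%N => t _; rewrite Gf0 !(mulr0, mul0r) subr_le0 gap_wavg_le0.
have Gf_gt0 : 0 < Gf by rewrite lt_neqAle eq_sym Gf_neq0.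
have ln_c_ge0 : 0 <= ln c by rewrite ln_ge0.
have K_ge0 : 0 <= Num.sqrt beta + Gf by rewrite addr_ge0 ?sqrtr_ge0.
have Q_gt0 : 0 < D ^+ 2 / (4 * alpha ^+ 2) + 1 + Gf / Num.sqrt beta.
  have := divr_ge0 (sqr_ge0 D) (mulr_ge0 (ler0n _ 4) (sqr_ge0 alpha)).
  have := divr_ge0 Gf_ge0 (sqrtr_ge0 beta); lra.
have a_ge0 := divr_ge0
  (mulr_ge0 K_ge0 (addr_ge0 (sqr_ge0 D) (mulr_ge0 (mulr_ge0 (sqr_ge0 alpha) c_ge0) ln_c_ge0)))
  (mulr_ge0 (ler0n R 2) (ltW alpha_gt0)).
have b_ge0 := divr_ge0 (mulr_ge0 (mulr_ge0 K_ge0 (ltW alpha_gt0)) c_ge0) (ler0n R 2).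
have c_gt0 : 0 < 2 * alpha * Gf * (D ^+ 2 / (4 * alpha ^+ 2) + 1 + Gf / Num.sqrt beta).
  by rewrite !mulr_gt0.
have [T0 gap_le] := eventually_le_log_sqrt a_ge0 b_ge0 c_gt0 gap_wavg_le_log.
by exists T0 => t /gap_le; rewrite [_ / _ * _]mulrAC.
Qed.

Lemma dist_avg_eventually : exists T0, forall t, (T0 <= t)%N ->
  dist (t.+1%:R^-1 *: \sum_(i < t.+1) z i) Hs <=
  (1 + ln t.+1%:R) ^+ 2 * (2 * alpha / Num.sqrt t.+1%:R * (1 + Gf / Num.sqrt beta)).
Proof.
have ln_c_ge0 : 0 <= ln c by rewrite ln_ge0.
have a_ge0 := addr_ge0 (mulr_ge0 (ler0n R 2) D_ge0)
  (mulr_ge0 (ltW alpha_gt0) (addr_ge0 ler01 (mulr_ge0 c_ge0 ln_c_ge0))).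
have b_ge0 := mulr_ge0 (ltW alpha_gt0) c_ge0.
have c_gt0 : 0 < 2 * alpha * (1 + Gf / Num.sqrt beta).
  by rewrite !mulr_gt0 // ltr_pwDl ?divr_ge0 ?sqrtr_ge0.
have [T0 dist_le] := eventually_le_log_sqrt a_ge0 b_ge0 c_gt0 dist_avg_le_log.
by exists T0 => t /dist_le; rewrite [_ / _ * _]mulrAC.
Qed.

End DouglasRachford.

Theorem theorem3 (R : realType) :
  exists C : R, 0 < C /\ exists k : nat,
  forall (n : nat) (f : 'rV[R]_n -> R) (Gs Hs : set 'rV[R]_n)
         (xstar : 'rV[R]_n) (alpha beta Gf : R)
         (y z u x : nat -> 'rV[R]_n),
    convex_fun f ->
    closed Gs -> convex_set Gs ->
    closed Hs -> convex_set Hs ->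
    (* x_star solves min f over G ∩ H *)
    Gs xstar -> Hs xstar ->
    (forall w, Gs w -> Hs w -> f xstar <= f w) ->
    0 < alpha -> 0 < beta ->
    (* the iteration, started at y 0 *)
    let gamma := fun t : nat =>
      alpha / Num.sqrt (beta + \sum_(tau < t) enorm (u tau) ^+ 2) in
    (forall t, is_proj Gs (y t) (z t)) ->
    (forall t, subgrad f (z t) (u t)) ->
    (forall t, is_proj Hs (2%:R *: z t - y t - gamma t *: u t) (x t)) ->
    (forall t, y t.+1 = y t - z t + x t) ->
    (* bounded subgradients *)
    (forall t, enorm (u t) <= Gf) ->
    let D := enorm (y 0%N - xstar) in
    let zbar := fun t : nat => (t.+1%:R)^-1 *: \sum_(tau < t.+1) z tau in
    let ztilde := fun t : nat =>
      (\sum_(tau < t.+1) gamma tau)^-1 *: \sum_(tau < t.+1) (gamma tau *: z tau) in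
    exists T0 : nat, forall t : nat, (T0 <= t)%N ->
      f (ztilde t) - f xstar <=
        C * (1 + ln (t.+1%:R)) ^+ k *
        (2%:R * alpha * Gf / Num.sqrt (t.+1%:R) *
         (D ^+ 2 / (4%:R * alpha ^+ 2) + 1 + Gf / Num.sqrt beta))
      /\
      dist (zbar t) Hs <=
        C * (1 + ln (t.+1%:R)) ^+ k *
        (2%:R * alpha / Num.sqrt (t.+1%:R) * (1 + Gf / Num.sqrt beta)).
Proof.
exists 1; split; first exact: ltr01.
exists 2%N => n f Gs Hs xstar alpha beta Gf y z u x cf _ cG _ cH Gx Hx _ a0 b0
  gamma Pz sg Px y_rec u_le D zbar ztilde.
have [T1 gap_le] := gap_wavg_eventually cf cG cH Gx Hx a0 b0 Pz sg Px y_rec u_le.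
have [T2 dist_le] := dist_avg_eventually cG cH Gx Hx a0 b0 Pz Px y_rec u_le.
exists (maxn T1 T2) => t; rewrite geq_max => /andP[/gap_le gap /dist_le dist_zbar].
by split; rewrite mul1r.
Qed.
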